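(* Let $\alpha_1,\alpha_2\in\mathbb{C}$ with $\operatorname{Im}\alpha_2\neq0$, such that $\operatorname{Im}\alpha_1/\operatorname{Im}\alpha_2$ is an irrational non-Liouville number, $\operatorname{Re}\alpha_2\in\mathbb{Q}$, and $1,\operatorname{Re}\alpha_1,\operatorname{Im}\alpha_1/\operatorname{Im}\alpha_2$ are linearly independent over $\mathbb{Z}$. Then $L_2=D_t+\alpha_1D_x+\alpha_2D_y$ is globally hypoelliptic on $\mathbb{T}^3$, while $\mathcal{M}_2=\{\lambda\in\mathbb{C}: L_2-\lambda\text{ is not GH on }\mathbb{T}^3\}$ is a dense $\mathcal{G}_\delta$ subset of $\mathbb{C}$. In particular this holds for $D_t+(\sqrt2+i\sqrt3)D_x+(1+i)D_y$.
   Context: $\mathbb{T}^3=\mathbb{R}^3/2\pi\mathbb{Z}^3$ with variables $(t,x,y)$; $D_t=-i\partial_t$ etc. A linear differential operator $P$ on $\mathbb{T}^n$ is globally hypoelliptic (GH) if $u\in\mathcal{D}'(\mathbb{T}^n)$ and $Pu\in\mathcal{C}^\infty(\mathbb{T}^n)$ imply $u\in\mathcal{C}^\infty(\mathbb{T}^n)$. A real number $\rho$ is Liouville if it is irrational and for every $M>0$ there are infinitely many $(p,q)\in\mathbb{Z}\times\mathbb{N}$ with $|\rho-p/q|<q^{-M}$. *)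

From Stdlib Require Import Reals ZArith List.
From Coquelicot Require Import Coquelicot.
Open Scope R_scope.

(* Lattice Z^3 indexing Fourier modes e^{i(k t + m x + n y)} on T^3. *)
Definition Z3 := (Z * Z * Z)%type.

Definition z3norm (k : Z3) : R :=
  let '(a, b, c) := k in Rabs (IZR a) + Rabs (IZR b) + Rabs (IZR c).

(* A distribution on T^3 is identified with its Fourier coefficient sequence;
   D'(T^3) = sequences of at most polynomial growth. *)
Definition is_distribution (u : Z3 -> C) : Prop :=
  exists (M : R) (N : nat), forall k, Cmod (u k) <= M * (1 + z3norm k) ^ N.

(* C^infty(T^3) = rapidly decreasing Fourier coefficient sequences. *)
Definition is_smooth (u : Z3 -> C) : Prop :=
  forall N : nat, exists M : R, forall k, Cmod (u k) * (1 + z3norm k) ^ N <= M.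

(* Full symbol of D_t + a1 D_x + a2 D_y - lam  (D = -i d/d.) on the mode (k,m,n). *)
Definition symbol (a1 a2 lam : C) (k : Z3) : C :=
  let '(kt, kx, ky) := k in
  (RtoC (IZR kt) + a1 * RtoC (IZR kx) + a2 * RtoC (IZR ky) - lam)%C.

Definition GH (a1 a2 lam : C) : Prop :=
  forall u : Z3 -> C, is_distribution u ->
    is_smooth (fun k => (symbol a1 a2 lam k * u k)%C) -> is_smooth u.

Definition rational (x : R) : Prop :=
  exists p q : Z, q <> 0%Z /\ x = IZR p / IZR q.

Definition irrational (x : R) : Prop := ~ rational x.

(* "infinitely many (p,q)": not contained in any finite list. *)
Definition Liouville (rho : R) : Prop :=
  irrational rho /\
  forall M : R, 0 < M ->
    forall l : list (Z * nat), exists (p : Z) (q : nat),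
      ~ In (p, q) l /\ (0 < q)%nat /\
      Rabs (rho - IZR p / INR q) < Rpower (INR q) (- M).

Definition Z_lin_indep3 (x y : R) : Prop :=
  forall a b c : Z, IZR a + IZR b * x + IZR c * y = 0 ->
    a = 0%Z /\ b = 0%Z /\ c = 0%Z.

Definition openC (U : C -> Prop) : Prop :=
  forall z, U z -> exists e : R, 0 < e /\ forall w, Cmod (w - z)%C < e -> U w.

Definition denseC (S : C -> Prop) : Prop :=
  forall z (e : R), 0 < e -> exists w, S w /\ Cmod (w - z)%C < e.

Definition G_deltaC (S : C -> Prop) : Prop :=
  exists U : nat -> (C -> Prop), (forall n, openC (U n)) /\
    forall z, S z <-> forall n, U n z.

Definition M2 (a1 a2 : C) : C -> Prop := fun lam => ~ GH a1 a2 lam.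

(* The multiplier of L_2 - lam on the Fourier mode k = (k_t, k_x, k_y) is sigma(k) - lam,
   sigma(k) = k_t + a1 k_x + a2 k_y.  L_2 - lam fails to be globally hypoelliptic exactly when
   |sigma(k) - lam| decays faster than every power of |k| along some sequence of modes, so M_2 is
   the intersection over n of the open sets of those lam within (1 + |k|)^-n of some sigma(k)
   with |k| >= n: a G_delta.  Since Im sigma(k) = Im a2 (rho k_x + k_y) with rho = Im a1 / Im a2,
   the non-Liouville hypothesis bounds |sigma(k)| below by a negative power of |k| for k <> 0,
   which is global hypoellipticity of L_2.  Writing Re a2 = P / Q, Kronecker's theorem for
   1, Re a1, rho / Q makes sigma(Z^3) dense in C; with the lower bound, the values sigma(k) with
   |k| >= n remain dense, so each of the open sets above is dense and Baire's theorem applies.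
   In the example rho = sqrt 3 is a quadratic irrational, hence not a Liouville number. *)

From Stdlib Require Import Reals ZArith List Lra Lia Znumtheory ClassicalEpsilon.
From Coquelicot Require Import Coquelicot.
Open Scope R_scope.

Lemma sum_f_R0_ge_term (f : nat -> R) (n i : nat) :
  (forall j, 0 <= f j) -> (i <= n)%nat -> f i <= sum_f_R0 f n.
Proof.
  intros Hf Hi; induction n as [|n IH].
  - replace i with 0%nat by lia; simpl; lra.
  - simpl; destruct (Nat.eq_dec i (S n)) as [-> | Hne].
    + pose proof (cond_pos_sum f n Hf); lra.
    + pose proof (IH ltac:(lia)); pose proof (Hf (S n)); lra.
Qed.

Lemma INR_unbounded (x : R) : exists n : nat, x < INR n.
Proof.
  destruct (archimed x) as [Hup _].
  exists (Z.to_nat (up x)).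
  destruct (Z_lt_le_dec (up x) 0) as [Hneg | Hpos].
  - replace (Z.to_nat (up x)) with 0%nat by lia; apply IZR_lt in Hneg; simpl; lra.
  - rewrite INR_IZR_INZ, Z2Nat.id by lia; exact Hup.
Qed.

Lemma list_min_pos {A : Type} (P : A -> Prop) (g : A -> R) (l : list A) :
  (forall x, P x -> 0 < g x) -> exists c, 0 < c /\ forall x, In x l -> P x -> c <= g x.
Proof.
  intros Hg; induction l as [|a l [c [Hc Hl]]]; [exists 1; split; [lra | contradiction] |].
  destruct (classic (P a)) as [Ha | Ha].
  - exists (Rmin c (g a)); split; [apply Rmin_glb_lt; auto |].
    intros x [<- | Hx] Px; [apply Rmin_r | eapply Rle_trans; [apply Rmin_l | auto]].
  - exists c; split; auto; intros x [<- | Hx] Px; [contradiction | auto].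
Qed.

Lemma Int_part_spec (x : R) : IZR (Int_part x) <= x < IZR (Int_part x) + 1.
Proof. pose proof (base_Int_part x); lra. Qed.

Lemma Int_part_eq_dist_lt (x y : R) : Int_part x = Int_part y -> Rabs (x - y) < 1.
Proof.
  intros E; pose proof (Int_part_spec x); pose proof (Int_part_spec y); rewrite E in *.
  apply Rabs_def1; lra.
Qed.

Lemma Un_cv_dist_le (u : nat -> R) (l a b : R) (n : nat) :
  Un_cv u l -> (forall m, (n <= m)%nat -> Rabs (u m - a) <= b) -> Rabs (l - a) <= b.
Proof.
  intros Hcv Hb; apply Rnot_lt_le; intro Hlt.
  destruct (Hcv (Rabs (l - a) - b) ltac:(lra)) as [N HN].
  specialize (HN (max n N) ltac:(lia)); specialize (Hb (max n N) ltac:(lia)).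
  unfold Rdist in HN; rewrite Rabs_minus_sym in HN.
  pose proof (Rabs_triang (l - u (max n N)) (u (max n N) - a)).
  replace (l - u (max n N) + (u (max n N) - a)) with (l - a) in * by ring; lra.
Qed.

Lemma Cmod_sub_triangle (u v w : C) : Cmod (u - w) <= Cmod (u - v) + Cmod (v - w).
Proof. replace (u - w)%C with ((u - v) + (v - w))%C by ring; apply Cmod_triangle. Qed.

Lemma Re_Im_le_Cmod (z : C) : Rabs (Re z) <= Cmod z /\ Rabs (Im z) <= Cmod z.
Proof. pose proof (Rmax_Cmod z); split; eapply Rle_trans; eauto; [apply Rmax_l | apply Rmax_r]. Qed.

Lemma Cmod_le_Rabs_sum (z : C) : Cmod z <= Rabs (Re z) + Rabs (Im z).
Proof.
  destruct z as [x y]; unfold Cmod, Re, Im; cbn [fst snd].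
  pose proof (Rabs_pos x); pose proof (Rabs_pos y).
  rewrite <- (sqrt_Rsqr (Rabs x + Rabs y)) by lra.
  apply sqrt_le_1_alt; rewrite <- (pow2_abs x), <- (pow2_abs y); unfold Rsqr; nra.
Qed.

Lemma z3norm_ge0 (k : Z3) : 0 <= z3norm k.
Proof.
  destruct k as [[a b] c]; simpl.
  pose proof (Rabs_pos (IZR a)); pose proof (Rabs_pos (IZR b)); pose proof (Rabs_pos (IZR c)); lra.
Qed.

Lemma symbol_components (a1 a2 lam : C) (kt kx ky : Z) :
  symbol a1 a2 lam (kt, kx, ky) =
  (IZR kt + Re a1 * IZR kx + Re a2 * IZR ky - Re lam,
   Im a1 * IZR kx + Im a2 * IZR ky - Im lam).
Proof.
  destruct a1, a2, lam; unfold symbol, Cminus, Cplus, Cmult, Copp, RtoC, Re, Im; simpl.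
  f_equal; ring.
Qed.

Lemma symbol_sub (a1 a2 lam : C) (k : Z3) :
  symbol a1 a2 lam k = (symbol a1 a2 (RtoC 0) k - lam)%C.
Proof.
  destruct k as [[kt kx] ky]; rewrite !symbol_components.
  destruct lam; unfold Cminus, Cplus, Copp, Re, Im; simpl; f_equal; ring.
Qed.

Definition Z3_add (k k' : Z3) : Z3 :=
  let '(a, b, c) := k in let '(a', b', c') := k' in ((a + a')%Z, (b + b')%Z, (c + c')%Z).

Lemma symbol_add (a1 a2 : C) (k k' : Z3) :
  symbol a1 a2 (RtoC 0) (Z3_add k k') =
  (symbol a1 a2 (RtoC 0) k + symbol a1 a2 (RtoC 0) k')%C.
Proof.
  destruct k as [[a b] c], k' as [[a' b'] c']; simpl Z3_add.
  rewrite !symbol_components, !plus_IZR; unfold Cplus; simpl; f_equal; ring.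
Qed.

Lemma z3norm_add_ge (k k' : Z3) : z3norm k' - z3norm k <= z3norm (Z3_add k k').
Proof.
  destruct k as [[a b] c], k' as [[a' b'] c']; simpl; rewrite !plus_IZR.
  assert (Hrev : forall x y, Rabs y - Rabs x <= Rabs (x + y)).
  { intros x y; pose proof (Rabs_triang (x + y) (- x)) as Htri; rewrite Rabs_Ropp in Htri.
    replace (x + y + - x) with y in Htri by ring; lra. }
  pose proof (Hrev (IZR a) (IZR a')); pose proof (Hrev (IZR b) (IZR b')).
  pose proof (Hrev (IZR c) (IZR c')).
  lra.
Qed.

(** * Global hypoellipticity and the sets M_2 *)

Section GlobalHypoellipticity.

Variables a1 a2 : C.

Definition decay_set (n : nat) (lam : C) : Prop :=
  exists k, INR n <= z3norm k /\ Cmod (symbol a1 a2 lam k) * (1 + z3norm k) ^ n < 1.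

Lemma GH_of_symbol_lower_bound (lam : C) (n : nat) :
  (forall k, INR n <= z3norm k -> 1 <= Cmod (symbol a1 a2 lam k) * (1 + z3norm k) ^ n) ->
  GH a1 a2 lam.
Proof.
  intros Hlow u [M0 [N0 Hu]] Hsmooth N.
  destruct (Hsmooth (n + N)%nat) as [M1 HM1].
  exists (Rmax M1 (M0 * (1 + INR n) ^ N0 * (1 + INR n) ^ N)).
  intro k; pose proof (z3norm_ge0 k); pose proof (Cmod_ge_0 (u k)).
  pose proof (pow_R1_Rle (1 + z3norm k) N ltac:(lra)).
  destruct (Rle_lt_dec (INR n) (z3norm k)) as [Hfar | Hnear].
  - apply Rle_trans with M1; [| apply Rmax_l].
    specialize (HM1 k); rewrite Cmod_mult, pow_add in HM1.
    pose proof (Hlow k Hfar).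
    assert (0 <= Cmod (u k) * (1 + z3norm k) ^ N) by nra.
    apply Rle_trans with ((Cmod (symbol a1 a2 lam k) * (1 + z3norm k) ^ n) *
                          (Cmod (u k) * (1 + z3norm k) ^ N)); nra.
  - apply Rle_trans with (M0 * (1 + INR n) ^ N0 * (1 + INR n) ^ N); [| apply Rmax_r].
    specialize (Hu k).
    pose proof (pow_R1_Rle (1 + z3norm k) N0 ltac:(lra)).
    assert ((1 + z3norm k) ^ N0 <= (1 + INR n) ^ N0) by (apply pow_incr; lra).
    assert ((1 + z3norm k) ^ N <= (1 + INR n) ^ N) by (apply pow_incr; lra).
    assert (0 <= M0) by nra.
    apply Rle_trans with (M0 * (1 + z3norm k) ^ N0 * (1 + z3norm k) ^ N).
    + apply Rmult_le_compat_r; lra.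
    + apply Rmult_le_compat; [nra | lra | apply Rmult_le_compat_l |]; lra.
Qed.

(* The witness is the indicator of a sequence of frequencies along which the symbol decays
   faster than any power: its image under the operator is smooth, although it is not. *)
Lemma not_GH_of_decay (lam : C) : (forall n, decay_set n lam) -> ~ GH a1 a2 lam.
Proof.
  intros Hdecay HGH.
  destruct (choice (fun n k => INR n <= z3norm k /\
                  Cmod (symbol a1 a2 lam k) * (1 + z3norm k) ^ n < 1) Hdecay) as [f Hf].
  set (u := fun k => if excluded_middle_informative (exists n, f n = k) then RtoC 1 else RtoC 0).
  assert (Hsmooth : is_smooth u).
  { apply HGH.
    - exists 1, 0%nat; intro k; unfold u.
      destruct excluded_middle_informative; rewrite Cmod_R; [rewrite Rabs_R1 | rewrite Rabs_R0];
        simpl; lra.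
    - intro N.
      set (g := fun i => Cmod (symbol a1 a2 lam (f i)) * (1 + z3norm (f i)) ^ N).
      assert (Hg : forall i, 0 <= g i).
      { intro i; pose proof (z3norm_ge0 (f i)); pose proof (Cmod_ge_0 (symbol a1 a2 lam (f i))).
        apply Rmult_le_pos; [lra | apply pow_le; lra]. }
      exists (1 + sum_f_R0 g N); pose proof (cond_pos_sum g N Hg).
      intro k; unfold u; destruct excluded_middle_informative as [[n <-] | _].
      + rewrite Cmult_1_r; fold (g n); destruct (le_lt_dec N n) as [HNn | HnN].
        * destruct (Hf n) as [_ Hsmall]; pose proof (z3norm_ge0 (f n)).
          pose proof (Cmod_ge_0 (symbol a1 a2 lam (f n))).
          pose proof (Rle_pow (1 + z3norm (f n)) N n ltac:(lra) HNn).
          apply Rle_trans with (Cmod (symbol a1 a2 lam (f n)) * (1 + z3norm (f n)) ^ n);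
            [apply Rmult_le_compat_l |]; lra.
        * pose proof (sum_f_R0_ge_term g N n Hg ltac:(lia)); lra.
      + rewrite Cmult_0_r, Cmod_0; lra. }
  destruct (Hsmooth 1%nat) as [M HM].
  destruct (INR_unbounded M) as [n Hn].
  specialize (HM (f n)); destruct (Hf n) as [Hfn _].
  unfold u in HM; destruct excluded_middle_informative as [_ | Hnot].
  - rewrite Cmod_R, Rabs_R1 in HM; simpl in HM; lra.
  - apply Hnot; exists n; reflexivity.
Qed.

Lemma M2_iff_decay (lam : C) : M2 a1 a2 lam <-> forall n, decay_set n lam.
Proof.
  split.
  - intros HM n; apply NNPP; intro Hn; apply HM, (GH_of_symbol_lower_bound lam n).
    intros k Hk; apply Rnot_lt_le; intro Hlt; apply Hn; exists k; auto.
  - apply not_GH_of_decay.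
Qed.

Lemma decay_set_open (n : nat) : openC (decay_set n).
Proof.
  intros lam [k [Hk Hsmall]].
  set (A := (1 + z3norm k) ^ n) in *; set (d := Cmod (symbol a1 a2 lam k)) in *.
  assert (HA : 1 <= A) by (apply pow_R1_Rle; pose proof (z3norm_ge0 k); lra).
  exists ((1 - d * A) / A); split; [apply Rdiv_lt_0_compat; lra |].
  intros w Hw; exists k; split; auto; fold A.
  apply Rmult_lt_compat_r with (r := A) in Hw; [| lra].
  unfold Rdiv in Hw; rewrite Rmult_assoc, Rinv_l, Rmult_1_r in Hw by lra.
  assert (Hsym : symbol a1 a2 w k = (symbol a1 a2 lam k - (w - lam))%C).
  { rewrite (symbol_sub a1 a2 w), (symbol_sub a1 a2 lam); ring. }
  assert (Htri : Cmod (symbol a1 a2 w k) <= d + Cmod (w - lam)).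
  { rewrite Hsym; unfold Cminus at 1; rewrite <- (Cmod_opp (w - lam)); apply Cmod_triangle. }
  pose proof (Cmod_ge_0 (symbol a1 a2 w k)); nra.
Qed.

End GlobalHypoellipticity.

(** * The Baire category theorem in C *)

(* The factor 2 comes from passing to the limit coordinatewise. *)
Lemma nested_balls_limit (c : nat -> C) (r : nat -> R) :
  (forall n m, (n <= m)%nat -> Cmod (c m - c n) <= r n) ->
  (forall eps, 0 < eps -> exists n, r n < eps) ->
  exists l, forall n, Cmod (l - c n) <= 2 * r n.
Proof.
  intros Hnest Hsmall.
  assert (Hcoord : forall g : C -> R, (forall x, Rabs (g x) <= Cmod x) ->
            (forall x y, g (x - y)%C = g x - g y) ->
            exists l, forall n, Rabs (l - g (c n)) <= r n).
  { intros g Hg Hlin.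
    assert (Hclose : forall n m, (n <= m)%nat -> Rabs (g (c m) - g (c n)) <= r n).
    { intros n m Hnm; rewrite <- Hlin; eapply Rle_trans; [apply Hg | auto]. }
    destruct (Rcomplete.R_complete (fun n => g (c n))) as [l Hl].
    { intros eps Heps; destruct (Hsmall (eps / 2) ltac:(lra)) as [N HN].
      exists N; intros n m Hn Hm; unfold Rdist.
      pose proof (Hclose N n Hn); pose proof (Hclose N m Hm).
      pose proof (Rabs_triang (g (c n) - g (c N)) (g (c N) - g (c m))) as Htri.
      rewrite (Rabs_minus_sym (g (c N))) in Htri.
      replace (g (c n) - g (c N) + (g (c N) - g (c m))) with (g (c n) - g (c m)) in Htri by ring.
      lra. }
    exists l; intro n; exact (Un_cv_dist_le _ _ _ _ n Hl (Hclose n)). }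
  destruct (Hcoord Re) as [l1 Hl1]; [intro x; apply Re_Im_le_Cmod | reflexivity |].
  destruct (Hcoord Im) as [l2 Hl2]; [intro x; apply Re_Im_le_Cmod | reflexivity |].
  exists (l1, l2); intro n.
  eapply Rle_trans; [apply Cmod_le_Rabs_sum |].
  apply Rle_trans with (r n + r n); [apply Rplus_le_compat; [apply Hl1 | apply Hl2] | lra].
Qed.

Lemma baire_C (U : nat -> C -> Prop) :
  (forall n, openC (U n)) -> (forall n, denseC (U n)) -> denseC (fun z => forall n, U n z).
Proof.
  intros Hopen Hdense z e He.
  assert (Hstep : forall np : nat * (C * R), exists p' : C * R,
            let '(n, (c, r)) := np in 0 < r ->
            0 < snd p' /\ snd p' <= r / 2 /\
            forall w, Cmod (w - fst p') <= 2 * snd p' -> U n w /\ Cmod (w - c) <= r).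
  { intros [n [c r]]; destruct (Rlt_dec 0 r) as [Hr | Hr]; [| exists (c, r); lra].
    destruct (Hdense n c (r / 2) ltac:(lra)) as [w0 [Hw0 Hw0c]].
    destruct (Hopen n w0 Hw0) as [e0 [He0 Hball]].
    exists (w0, Rmin (e0 / 4) (r / 4)); intros _; simpl.
    pose proof (Rmin_l (e0 / 4) (r / 4)); pose proof (Rmin_r (e0 / 4) (r / 4)).
    pose proof (Rmin_glb_lt (e0 / 4) (r / 4) 0 ltac:(lra) ltac:(lra)).
    split; [lra |]; split; [lra |]; intros v Hv; split.
    - apply Hball; lra.
    - pose proof (Cmod_sub_triangle v w0 c); lra. }
  destruct (choice _ Hstep) as [step Hstepf].
  set (p := fix p n := match n with O => (z, e / 4) | S n => step (n, p n) end).
  set (c := fun n => fst (p n)); set (r := fun n => snd (p n)).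
  assert (Hgo : forall n, 0 < r n -> 0 < r (S n) /\ r (S n) <= r n / 2 /\
            forall w, Cmod (w - c (S n)) <= 2 * r (S n) -> U n w /\ Cmod (w - c n) <= r n).
  { intro n; specialize (Hstepf (n, p n)); unfold c, r; simpl p; destruct (p n); exact Hstepf. }
  assert (Hpos : forall n, 0 < r n).
  { induction n as [|n IH]; [unfold r; simpl; lra | apply Hgo, IH]. }
  assert (Hnest : forall n m, (n <= m)%nat -> Cmod (c m - c n) <= r n).
  { assert (Hballs : forall n m, (n <= m)%nat ->
              forall w, Cmod (w - c m) <= r m -> Cmod (w - c n) <= r n).
    { intros n m Hnm; induction Hnm as [|m Hnm IH]; auto; intros w Hw; apply IH.
      apply (Hgo m (Hpos m)); pose proof (Hpos (S m)); lra. }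
    intros n m Hnm; apply (Hballs n m Hnm).
    unfold Cminus; rewrite Cplus_opp_r, Cmod_0; apply Rlt_le, Hpos. }
  assert (Hgeom : forall n, r n <= e / 4 * (/ 2) ^ n).
  { induction n as [|n IH]; [unfold r; simpl; lra |].
    destruct (Hgo n (Hpos n)) as [_ [Hhalf _]]; simpl; lra. }
  assert (Hsmall : forall eps, 0 < eps -> exists n, r n < eps).
  { intros eps Heps.
    destruct (pow_lt_1_zero (/ 2) ltac:(rewrite Rabs_pos_eq; lra) (4 * eps / e))
      as [N HN]; [apply Rdiv_lt_0_compat; lra |].
    exists N; specialize (HN N (le_n N)); rewrite Rabs_pos_eq in HN by (apply pow_le; lra).
    specialize (Hgeom N).
    apply Rmult_lt_compat_l with (r := e / 4) in HN; [| lra].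
    replace (e / 4 * (4 * eps / e)) with eps in HN by (field; lra); lra. }
  destruct (nested_balls_limit c r Hnest Hsmall) as [l Hl].
  exists l; split.
  - intro n; apply (Hgo n (Hpos n)), Hl.
  - specialize (Hl 0%nat); unfold r, c in Hl; simpl in Hl; lra.
Qed.

(** * Simultaneous Diophantine approximation *)

Lemma pigeonhole_nat (N : nat) (f : nat -> nat) :
  (forall i, (i <= N)%nat -> (f i < N)%nat) -> exists i j, (i < j <= N)%nat /\ f i = f j.
Proof.
  revert f; induction N as [|N IH]; intros f Hf; [specialize (Hf 0%nat); lia |].
  destruct (classic (exists i, (i <= N)%nat /\ f i = f (S N))) as [[i [Hi Hfi]] | Hnew].
  - exists i, (S N); split; [lia | exact Hfi].
  - set (g := fun i => if Nat.ltb (f i) (f (S N)) then f i else (f i - 1)%nat).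
    assert (Hne : forall i, (i <= N)%nat -> f i <> f (S N)) by (intros i Hi E; apply Hnew; eauto).
    destruct (IH g) as [i [j [Hij Hg]]].
    + intros i Hi; unfold g; pose proof (Hf i ltac:(lia)); pose proof (Hf (S N) ltac:(lia)).
      pose proof (Hne i Hi); destruct (Nat.ltb_spec (f i) (f (S N))); lia.
    + exists i, j; split; [lia |].
      pose proof (Hne i ltac:(lia)); pose proof (Hne j ltac:(lia)).
      unfold g in Hg; destruct (Nat.ltb_spec (f i) (f (S N))), (Nat.ltb_spec (f j) (f (S N))); lia.
Qed.

Lemma Int_part_scaled_frac_range (N : nat) (x : R) :
  (0 < N)%nat -> (0 <= Int_part (INR N * frac_part x) < Z.of_nat N)%Z.
Proof.
  intros HN; pose proof (base_fp x); pose proof (lt_0_INR N HN).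
  pose proof (Int_part_spec (INR N * frac_part x)).
  split; [apply le_IZR | apply lt_IZR; rewrite <- INR_IZR_INZ]; [| nra].
  assert (Hgt : -1 < IZR (Int_part (INR N * frac_part x))) by nra.
  apply lt_IZR in Hgt; apply IZR_le; lia.
Qed.

(* Pigeonhole on the N^2 subsquares of side 1/N of the unit square containing the
   fractional parts of (i al, i be), 0 <= i <= N^2. *)
Lemma dirichlet2 (al be : R) (N : nat) : (0 < N)%nat ->
  exists m a b : Z, (0 < m)%Z /\ Rabs (IZR m * al - IZR a) < / INR N /\
                    Rabs (IZR m * be - IZR b) < / INR N.
Proof.
  intros HN; pose proof (lt_0_INR N HN) as HNr.
  set (cell := fun x => Int_part (INR N * frac_part x)).
  assert (Hcell : forall x, (0 <= cell x < Z.of_nat N)%Z)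
    by (intro; apply Int_part_scaled_frac_range, HN).
  set (code := fun i => (N * Z.to_nat (cell (INR i * al)%R) + Z.to_nat (cell (INR i * be)%R))%nat).
  destruct (pigeonhole_nat (N * N) code) as [i [j [Hij Hcode]]].
  { intros i _; unfold code.
    pose proof (Hcell (INR i * al)); pose proof (Hcell (INR i * be)); nia. }
  apply Nat.div_mod_unique in Hcode as [Ea Eb];
    [| pose proof (Hcell (INR i * be)) | pose proof (Hcell (INR j * be))]; try lia.
  apply Z2Nat.inj in Ea, Eb; try apply Hcell.
  apply Int_part_eq_dist_lt in Ea, Eb.
  exists (Z.of_nat j - Z.of_nat i)%Z, (Int_part (INR j * al) - Int_part (INR i * al))%Z,
         (Int_part (INR j * be) - Int_part (INR i * be))%Z.
  split; [lia |]; rewrite !minus_IZR, <- !INR_IZR_INZ.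
  unfold frac_part in Ea, Eb.
  assert (Hscale : forall t, Rabs (INR N * t) < 1 -> Rabs t < / INR N).
  { intros t Ht; rewrite Rabs_mult, Rabs_pos_eq in Ht by lra.
    apply (Rmult_lt_reg_l (INR N)); [lra | rewrite Rinv_r; lra]. }
  split; apply Hscale; [eapply Rle_lt_trans, Ea | eapply Rle_lt_trans, Eb];
    right; rewrite <- Rabs_Ropp; f_equal; ring.
Qed.

Definition Z_orbit (al be x y : R) : Prop :=
  exists a b m : Z, x = IZR a + IZR m * al /\ y = IZR b + IZR m * be.

Lemma Z_orbit_int (al be : R) (j l : Z) : Z_orbit al be (IZR j) (IZR l).
Proof. exists j, l, 0%Z; split; ring. Qed.

Lemma Z_orbit_lincomb (al be x y x' y' : R) (s t : Z) :
  Z_orbit al be x y -> Z_orbit al be x' y' ->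
  Z_orbit al be (IZR s * x + IZR t * x') (IZR s * y + IZR t * y').
Proof.
  intros [a [b [m [-> ->]]]] [a' [b' [m' [-> ->]]]].
  exists (s * a + t * a')%Z, (s * b + t * b')%Z, (s * m + t * m')%Z.
  rewrite !plus_IZR, !mult_IZR; split; ring.
Qed.

(* Round down the coordinates of (X, Y) in the basis (u, w). *)
Lemma lattice_cover (u1 u2 w1 w2 X Y : R) : u1 * w2 - u2 * w1 <> 0 ->
  exists s t : Z, Rabs (X - (IZR s * u1 + IZR t * w1)) <= Rabs u1 + Rabs w1 /\
                  Rabs (Y - (IZR s * u2 + IZR t * w2)) <= Rabs u2 + Rabs w2.
Proof.
  intros Hdet.
  set (sr := (X * w2 - Y * w1) / (u1 * w2 - u2 * w1)).
  set (tr := (u1 * Y - u2 * X) / (u1 * w2 - u2 * w1)).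
  exists (Int_part sr), (Int_part tr).
  pose proof (Int_part_spec sr); pose proof (Int_part_spec tr).
  assert (Hcomb : forall a b x y, 0 <= a <= 1 -> 0 <= b <= 1 ->
            Rabs (a * x + b * y) <= Rabs x + Rabs y).
  { intros a b x y Ha Hb; eapply Rle_trans; [apply Rabs_triang |]; rewrite !Rabs_mult.
    rewrite (Rabs_pos_eq a), (Rabs_pos_eq b) by lra.
    pose proof (Rabs_pos x); pose proof (Rabs_pos y); nra. }
  split.
  - replace (X - (IZR (Int_part sr) * u1 + IZR (Int_part tr) * w1))
      with ((sr - IZR (Int_part sr)) * u1 + (tr - IZR (Int_part tr)) * w1)
      by (unfold sr, tr; field; auto).
    apply Hcomb; lra.
  - replace (Y - (IZR (Int_part sr) * u2 + IZR (Int_part tr) * w2))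
      with ((sr - IZR (Int_part sr)) * u2 + (tr - IZR (Int_part tr)) * w2)
      by (unfold sr, tr; field; auto).
    apply Hcomb; lra.
Qed.

(* Kronecker's theorem in dimension 2.  Dirichlet gives a short orbit vector u; a second
   application of Dirichlet to the slope of u gives an integer vector almost parallel to u,
   which, reduced modulo u, is a second short orbit vector w independent of u.  The orbit then
   contains the lattice spanned by u and w, whose fundamental parallelogram is small. *)
Lemma kronecker2 (al be : R) : Z_lin_indep3 al be ->
  forall X Y e, 0 < e -> exists x y, Z_orbit al be x y /\ Rabs (x - X) < e /\ Rabs (y - Y) < e.
Proof.
  intros Hind X Y e He.
  set (eps := e / 4).
  destruct (archimed_cor1 eps ltac:(unfold eps; lra)) as [N [HNe HN]].
  destruct (dirichlet2 al be N HN) as [m [a [b [Hm [Hu1 Hu2]]]]].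
  set (u1 := IZR m * al - IZR a) in *; set (u2 := IZR m * be - IZR b) in *.
  assert (Hu : Z_orbit al be u1 u2).
  { exists (- a)%Z, (- b)%Z, m; unfold u1, u2; rewrite !opp_IZR; split; ring. }
  assert (Hrel : forall P Q : Z, IZR Q * u1 = IZR P * u2 -> Q = 0%Z /\ P = 0%Z).
  { intros P Q E.
    destruct (Hind (- Q * a + P * b)%Z (Q * m)%Z (- (P * m))%Z) as [_ [E1 E2]]; [| nia].
    rewrite !plus_IZR, !mult_IZR, !opp_IZR, !mult_IZR; unfold u1, u2 in E; lra. }
  assert (Hu1nz : u1 <> 0).
  { intro E; destruct (Hrel 0%Z 1%Z) as [E1 _]; [rewrite E; lra | lia]. }
  destruct (dirichlet2 (u2 / u1) 0 N HN) as [j [l [_ [Hj [Hl _]]]]].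
  set (phi := u1 * IZR l - u2 * IZR j).
  assert (Hphi : phi <> 0).
  { intro E; destruct (Hrel j l) as [_ E2]; [unfold phi in E; lra | lia]. }
  assert (Hphi_small : Rabs phi < Rabs u1 * eps).
  { replace phi with (- (u1 * (IZR j * (u2 / u1) - IZR l))) by (unfold phi; field; auto).
    rewrite Rabs_Ropp, Rabs_mult; apply Rmult_lt_compat_l; [apply Rabs_pos_lt |]; auto; lra. }
  set (k := Int_part (IZR j / u1)); pose proof (Int_part_spec (IZR j / u1)) as Hk; fold k in Hk.
  set (w1 := IZR j - IZR k * u1); set (w2 := IZR l - IZR k * u2).
  assert (Hw : Z_orbit al be w1 w2).
  { replace w1 with (IZR 1 * IZR j + IZR (- k) * u1) by (unfold w1; rewrite opp_IZR; ring).
    replace w2 with (IZR 1 * IZR l + IZR (- k) * u2) by (unfold w2; rewrite opp_IZR; ring).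
    apply Z_orbit_lincomb; [apply Z_orbit_int | exact Hu]. }
  assert (Hu1pos : 0 < Rabs u1) by (apply Rabs_pos_lt; auto).
  assert (Hw1 : Rabs w1 <= Rabs u1).
  { replace w1 with ((IZR j / u1 - IZR k) * u1) by (unfold w1; field; auto).
    rewrite Rabs_mult, (Rabs_pos_eq (IZR j / u1 - IZR k)) by lra; nra. }
  assert (Hw2 : Rabs w2 < eps + Rabs u2).
  { replace w2 with (phi / u1 + (IZR j / u1 - IZR k) * u2) by (unfold w2, phi; field; auto).
    eapply Rle_lt_trans; [apply Rabs_triang |].
    rewrite Rabs_mult, (Rabs_pos_eq (IZR j / u1 - IZR k)) by lra.
    unfold Rdiv; rewrite Rabs_mult, Rabs_inv.
    assert (Rabs phi * / Rabs u1 < eps).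
    { apply (Rmult_lt_reg_r (Rabs u1)); [lra |]; rewrite Rmult_assoc, Rinv_l by lra; lra. }
    pose proof (Rabs_pos u2); unfold Rdiv in Hk; nra. }
  destruct (lattice_cover u1 u2 w1 w2 X Y) as [s [t [Hs Ht]]].
  { replace (u1 * w2 - u2 * w1) with phi by (unfold phi, w1, w2; ring); exact Hphi. }
  exists (IZR s * u1 + IZR t * w1), (IZR s * u2 + IZR t * w2).
  split; [apply Z_orbit_lincomb; auto |].
  rewrite (Rabs_minus_sym _ X), (Rabs_minus_sym _ Y); unfold eps in *; lra.
Qed.

(** * Non-Liouville numbers *)

Lemma irrational_dist_pos (rho : R) (p : Z) (q : nat) :
  irrational rho -> (0 < q)%nat -> 0 < Rabs (rho - IZR p / INR q).
Proof.
  intros Hirr Hq; apply Rabs_pos_lt; intro E; apply Hirr.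
  exists p, (Z.of_nat q); split; [lia | rewrite <- INR_IZR_INZ; lra].
Qed.

Lemma non_Liouville_bound_nat (rho : R) : irrational rho -> ~ Liouville rho ->
  exists c, 0 < c /\ exists N : nat, forall (p : Z) (q : nat), (0 < q)%nat ->
    c <= Rabs (rho - IZR p / INR q) * INR q ^ N.
Proof.
  intros Hirr HL.
  assert (Hex : exists M, 0 < M /\ exists l, forall p q, ~ In (p, q) l -> (0 < q)%nat ->
             Rpower (INR q) (- M) <= Rabs (rho - IZR p / INR q)).
  { apply NNPP; intro Hno; apply HL; split; auto; intros M HM l.
    apply NNPP; intro Hno'; apply Hno; exists M; split; auto; exists l.
    intros p q Hin Hq; apply Rnot_lt_le; intro Hlt; apply Hno'; exists p, q; auto. }
  destruct Hex as [M [HM [l Hl]]].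
  destruct (list_min_pos (fun pq : Z * nat => (0 < snd pq)%nat)
              (fun pq => Rabs (rho - IZR (fst pq) / INR (snd pq))) l) as [cl [Hcl Hmin]].
  { intros [p q] Hq; apply irrational_dist_pos; auto. }
  destruct (INR_unbounded M) as [N HN].
  exists (Rmin 1 cl); split; [apply Rmin_glb_lt; lra |]; exists N; intros p q Hq.
  assert (Hq1 : 1 <= INR q) by (apply (le_INR 1); lia).
  assert (HqN : 1 <= INR q ^ N) by (apply pow_R1_Rle; lra).
  destruct (classic (In (p, q) l)) as [Hin | Hnin].
  - pose proof (Hmin (p, q) Hin Hq); pose proof (Rmin_r 1 cl); simpl in *.
    pose proof (Rabs_pos (rho - IZR p / INR q)); nra.
  - specialize (Hl p q Hnin Hq); rewrite Rpower_Ropp in Hl.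
    assert (Rpower (INR q) M <= INR q ^ N).
    { rewrite <- Rpower_pow by lra; apply Rle_Rpower; lra. }
    assert (0 < Rpower (INR q) M) by apply exp_pos.
    assert (Hinv : / INR q ^ N <= / Rpower (INR q) M) by (apply Rinv_le_contravar; lra).
    pose proof (Rmin_l 1 cl).
    apply Rle_trans with 1; [lra |].
    apply (Rmult_le_reg_r (/ INR q ^ N)); [apply Rinv_0_lt_compat; lra |].
    rewrite Rmult_assoc, Rinv_r, Rmult_1_r, Rmult_1_l by lra; lra.
Qed.

Lemma non_Liouville_bound (rho : R) : irrational rho -> ~ Liouville rho ->
  exists c, 0 < c /\ exists N : nat, forall p q : Z, q <> 0%Z ->
    c <= Rabs (IZR q * rho - IZR p) * Rabs (IZR q) ^ N.
Proof.
  intros Hirr HL; destruct (non_Liouville_bound_nat rho Hirr HL) as [c [Hc [N HN]]].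
  exists c; split; auto; exists N; intros p q Hq.
  assert (Hq1 : 1 <= Rabs (IZR q)) by (rewrite <- abs_IZR; apply IZR_le; lia).
  assert (Habs : INR (Z.abs_nat q) = Rabs (IZR q))
    by (rewrite INR_IZR_INZ, Nat2Z.inj_abs_nat, abs_IZR; reflexivity).
  assert (Hsign : exists p', Rabs (IZR q * rho - IZR p) =
                             Rabs (IZR q) * Rabs (rho - IZR p' / Rabs (IZR q))).
  { assert (Hq0 : IZR q <> 0) by (apply not_0_IZR; auto).
    destruct (Z_lt_le_dec 0 q) as [Hpos | Hneg].
    - exists p; rewrite (Rabs_pos_eq (IZR q)) by (apply IZR_le; lia).
      replace (IZR q * rho - IZR p) with (IZR q * (rho - IZR p / IZR q)) by (field; auto).
      rewrite Rabs_mult, Rabs_pos_eq by (apply IZR_le; lia); reflexivity.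
    - assert (IZR q < 0) by (apply IZR_lt; lia).
      exists (- p)%Z; rewrite (Rabs_left (IZR q)) by lra.
      replace (IZR q * rho - IZR p) with (- (- IZR q * (rho - IZR (- p) / - IZR q)))
        by (rewrite opp_IZR; field; auto).
      rewrite Rabs_Ropp, Rabs_mult, (Rabs_pos_eq (- IZR q)) by lra; reflexivity. }
  destruct Hsign as [p' ->].
  specialize (HN p' (Z.abs_nat q) ltac:(lia)); rewrite Habs in HN.
  pose proof (pow_R1_Rle (Rabs (IZR q)) N Hq1); pose proof (Rabs_pos (rho - IZR p' / Rabs (IZR q))).
  nra.
Qed.

(** * Genericity of non-hypoellipticity *)

Definition symbol_bounded_below (a1 a2 : C) : Prop :=
  exists c, 0 < c /\ exists N : nat, forall k, k <> (0%Z, 0%Z, 0%Z) ->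
    c <= Cmod (symbol a1 a2 (RtoC 0) k) * (1 + z3norm k) ^ N.

Definition symbol_dense (a1 a2 : C) : Prop :=
  forall z e, 0 < e -> exists k, Cmod (symbol a1 a2 (RtoC 0) k - z) < e.

(* Away from k_x = 0 the imaginary part Im a2 (rho k_x + k_y) is controlled by the
   Diophantine condition on rho; otherwise one of the integer parts k_y, k_t is nonzero. *)
Lemma symbol_bounded_below_of_non_Liouville (a1 a2 : C) :
  Im a2 <> 0 -> irrational (Im a1 / Im a2) -> ~ Liouville (Im a1 / Im a2) ->
  symbol_bounded_below a1 a2.
Proof.
  intros Ha2 Hirr HL.
  destruct (non_Liouville_bound _ Hirr HL) as [c0 [Hc0 [N HN]]].
  assert (Ha2pos : 0 < Rabs (Im a2)) by (apply Rabs_pos_lt; auto).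
  set (c := Rmin (Rabs (Im a2) * c0) (Rmin (Rabs (Im a2)) 1)).
  assert (Hc1 : c <= Rabs (Im a2) * c0) by apply Rmin_l.
  assert (Hc2 : c <= Rabs (Im a2)) by (eapply Rle_trans; [apply Rmin_r | apply Rmin_l]).
  assert (Hc3 : c <= 1) by (eapply Rle_trans; [apply Rmin_r | apply Rmin_r]).
  exists c; split; [repeat apply Rmin_glb_lt; nra |]; exists N.
  intros [[kt kx] ky] Hk.
  set (s := symbol a1 a2 (RtoC 0) (kt, kx, ky)).
  assert (Hs : Re s = IZR kt + Re a1 * IZR kx + Re a2 * IZR ky /\
               Im s = Im a2 * (IZR kx * (Im a1 / Im a2) - IZR (- ky)))
    by (unfold s; rewrite symbol_components, opp_IZR; simpl; split; [ring | field; auto]).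
  destruct (Re_Im_le_Cmod s) as [HRe HIm]; destruct Hs as [-> ->] in HRe, HIm.
  set (P := (1 + z3norm (kt, kx, ky)) ^ N).
  assert (HP : 1 <= P)
    by (apply pow_R1_Rle; pose proof (z3norm_ge0 (kt, kx, ky)); lra).
  pose proof (Cmod_ge_0 s).
  destruct (Z.eq_dec kx 0) as [-> | Hkx]; [destruct (Z.eq_dec ky 0) as [-> | Hky] |].
  - assert (Hkt : kt <> 0%Z) by (intro; subst; apply Hk; reflexivity).
    assert (1 <= Rabs (IZR kt)) by (rewrite <- abs_IZR; apply IZR_le; lia).
    rewrite Rmult_0_r, Rmult_0_r, !Rplus_0_r in HRe; nra.
  - assert (1 <= Rabs (IZR ky)) by (rewrite <- abs_IZR; apply IZR_le; lia).
    rewrite Rmult_0_l, Rminus_0_l, opp_IZR, Ropp_involutive, Rabs_mult in HIm; nra.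
  - specialize (HN (- ky)%Z kx Hkx); rewrite Rabs_mult in HIm.
    assert (Rabs (IZR kx) ^ N <= P).
    { apply pow_incr; split; [apply Rabs_pos |]; simpl.
      pose proof (Rabs_pos (IZR kt)); pose proof (Rabs_pos (IZR ky)); lra. }
    pose proof (Rabs_pos (IZR kx * (Im a1 / Im a2) - IZR (- ky))).
    pose proof (pow_le (Rabs (IZR kx)) N (Rabs_pos _)); nra.
Qed.

Lemma Z_lin_indep3_div (x y : R) (q : Z) :
  q <> 0%Z -> Z_lin_indep3 x y -> Z_lin_indep3 x (y / IZR q).
Proof.
  intros Hq Hind a b c E.
  assert (Hq0 : IZR q <> 0) by (apply not_0_IZR; auto).
  destruct (Hind (q * a)%Z (q * b)%Z c) as [Ea [Eb ->]]; [| split; [|split]; auto; nia].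
  rewrite !mult_IZR.
  replace (IZR q * IZR a + IZR q * IZR b * x + IZR c * y)
    with (IZR q * (IZR a + IZR b * x + IZR c * (y / IZR q))) by (field; auto).
  rewrite E; ring.
Qed.

(* With Re a2 = P/Q, the modes (a - P b, m, Q b) have symbol
   (a + m Re a1) + i Q Im a2 (b + m rho / Q), so Kronecker's theorem applies. *)
Lemma symbol_dense_of_Kronecker (a1 a2 : C) :
  Im a2 <> 0 -> rational (Re a2) -> Z_lin_indep3 (Re a1) (Im a1 / Im a2) ->
  symbol_dense a1 a2.
Proof.
  intros Ha2 [P [Q [HQ HRe]]] Hind z e He.
  assert (HQr : IZR Q <> 0) by (apply not_0_IZR; auto).
  set (K := Rabs (Im a2 * IZR Q)).
  assert (HK : 0 < K) by (apply Rabs_pos_lt, Rmult_integral_contrapositive; auto).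
  set (e' := Rmin (e / 2) (e / (2 * K))).
  assert (He' : 0 < e') by (apply Rmin_glb_lt; [lra | apply Rdiv_lt_0_compat; lra]).
  destruct (kronecker2 _ _ (Z_lin_indep3_div _ _ Q HQ Hind) (Re z) (Im z / (Im a2 * IZR Q)) e' He')
    as [x [y [[a [b [m [-> ->]]]] [Hx Hy]]]].
  exists ((a - P * b)%Z, m, (Q * b)%Z).
  eapply Rle_lt_trans; [apply Cmod_le_Rabs_sum |].
  rewrite symbol_components; simpl; change (fst z) with (Re z); change (snd z) with (Im z).
  replace (IZR (a - P * b) + Re a1 * IZR m + Re a2 * IZR (Q * b) - 0 + - Re z)
    with (IZR a + IZR m * Re a1 - Re z) by (rewrite HRe, minus_IZR, !mult_IZR; field; auto).
  replace (Im a1 * IZR m + Im a2 * IZR (Q * b) - 0 + - Im z)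
    with (Im a2 * IZR Q * (IZR b + IZR m * (Im a1 / Im a2 / IZR Q) - Im z / (Im a2 * IZR Q)))
    by (rewrite mult_IZR; field; auto).
  rewrite Rabs_mult; fold K.
  assert (e' <= e / 2) by apply Rmin_l.
  assert (K * e' <= e / 2).
  { apply Rle_trans with (K * (e / (2 * K))); [apply Rmult_le_compat_l; [lra | apply Rmin_r] |].
    right; field; lra. }
  pose proof (Rabs_pos (IZR b + IZR m * (Im a1 / Im a2 / IZR Q) - Im z / (Im a2 * IZR Q))).
  nra.
Qed.

Section Genericity.

Variables a1 a2 : C.
Hypothesis Hbelow : symbol_bounded_below a1 a2.
Hypothesis Hdense : symbol_dense a1 a2.

Lemma GH_of_symbol_bounded_below : GH a1 a2 (RtoC 0).
Proof.
  destruct Hbelow as [c [Hc [N HN]]].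
  assert (Hinvc : 0 < / c) by (apply Rinv_0_lt_compat; lra).
  destruct (INR_unbounded (/ c)) as [n0 Hn0].
  assert (Hn0pos : (1 <= n0)%nat) by (destruct n0; [simpl in Hn0; lra | lia]).
  apply (GH_of_symbol_lower_bound a1 a2 _ (N + n0)).
  intros k Hk; rewrite plus_INR in Hk; pose proof (pos_INR N); pose proof (z3norm_ge0 k).
  assert (Hk0 : k <> (0%Z, 0%Z, 0%Z)) by (intros ->; simpl in Hk; rewrite Rabs_R0 in Hk; lra).
  specialize (HN k Hk0).
  assert (Hgrow : 1 + z3norm k <= (1 + z3norm k) ^ n0)
    by (rewrite <- pow_1 at 1; apply Rle_pow; [lra | lia]).
  assert (Hck : 1 <= c * (1 + z3norm k)).
  { apply Rle_trans with (c * / c); [rewrite Rinv_r; lra | apply Rmult_le_compat_l; lra]. }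
  rewrite pow_add, <- Rmult_assoc.
  apply Rle_trans with (c * (1 + z3norm k)); auto.
  apply Rmult_le_compat; lra.
Qed.

(* A symbol value within d of the point d/2 is nonzero, and it is so small that the lower
   bound forces its frequency to be large; adding it to an approximating frequency pushes
   that frequency beyond any prescribed size. *)
Lemma symbol_dense_far (z : C) (e : R) (n : nat) :
  0 < e -> exists k, INR n <= z3norm k /\ Cmod (symbol a1 a2 (RtoC 0) k - z) < e.
Proof.
  intros He; destruct Hbelow as [c [Hc [N HN]]].
  destruct (Hdense z (e / 2) ltac:(lra)) as [k1 Hk1].
  set (B := INR n + z3norm k1).
  assert (HB : 1 <= (1 + B) ^ N)
    by (apply pow_R1_Rle; unfold B; pose proof (pos_INR n); pose proof (z3norm_ge0 k1); lra).
  set (d := Rmin (e / 2) (c / (1 + B) ^ N)).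
  assert (Hd : 0 < d) by (apply Rmin_glb_lt; [lra | apply Rdiv_lt_0_compat; lra]).
  destruct (Hdense (RtoC (d / 2)) (d / 2) ltac:(lra)) as [k2 Hk2close].
  set (s2 := symbol a1 a2 (RtoC 0) k2) in *.
  assert (Hs2 : Cmod s2 < d).
  { pose proof (Cmod_triangle (s2 - RtoC (d / 2)) (RtoC (d / 2))) as Htri.
    replace (s2 - RtoC (d / 2) + RtoC (d / 2))%C with s2 in Htri by ring.
    rewrite Cmod_R, Rabs_pos_eq in Htri by lra; lra. }
  assert (Hk2 : k2 <> (0%Z, 0%Z, 0%Z)).
  { intros E; assert (Hzero : s2 = RtoC 0)
      by (unfold s2; rewrite E, symbol_components; unfold RtoC; simpl; f_equal; ring).
    rewrite Hzero in Hk2close.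
    replace (RtoC 0 - RtoC (d / 2))%C with (- RtoC (d / 2))%C in Hk2close by ring.
    rewrite Cmod_opp, Cmod_R, Rabs_pos_eq in Hk2close; lra. }
  assert (Hfar : B < z3norm k2).
  { apply Rnot_le_lt; intro Hle; specialize (HN k2 Hk2); fold s2 in HN.
    assert ((1 + z3norm k2) ^ N <= (1 + B) ^ N)
      by (apply pow_incr; pose proof (z3norm_ge0 k2); lra).
    assert (d * (1 + B) ^ N <= c).
    { apply Rle_trans with (c / (1 + B) ^ N * (1 + B) ^ N).
      - apply Rmult_le_compat_r; [lra | apply Rmin_r].
      - right; field; lra. }
    pose proof (Cmod_ge_0 s2); pose proof (z3norm_ge0 k2).
    pose proof (pow_le (1 + z3norm k2) N ltac:(lra)).
    nra. }
  exists (Z3_add k1 k2); split.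
  - pose proof (z3norm_add_ge k1 k2); unfold B in Hfar; lra.
  - rewrite symbol_add; fold s2.
    replace (symbol a1 a2 (RtoC 0) k1 + s2 - z)%C with ((symbol a1 a2 (RtoC 0) k1 - z) + s2)%C
      by ring.
    eapply Rle_lt_trans; [apply Cmod_triangle |].
    assert (d <= e / 2) by apply Rmin_l; lra.
Qed.

Lemma decay_set_dense (n : nat) : denseC (decay_set a1 a2 n).
Proof.
  intros z e He; destruct (symbol_dense_far z e n He) as [k [Hk Hclose]].
  exists (symbol a1 a2 (RtoC 0) k); split; auto.
  exists k; split; auto.
  rewrite symbol_sub; unfold Cminus; rewrite Cplus_opp_r, Cmod_0, Rmult_0_l; lra.
Qed.

Lemma GH_and_M2_dense_Gdelta :
  GH a1 a2 (RtoC 0) /\ denseC (M2 a1 a2) /\ G_deltaC (M2 a1 a2).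
Proof.
  split; [exact GH_of_symbol_bounded_below | split].
  - intros z e He.
    destruct (baire_C (decay_set a1 a2) (decay_set_open a1 a2) decay_set_dense z e He)
      as [w [Hw Hwz]].
    exists w; split; auto; apply M2_iff_decay; exact Hw.
  - exists (decay_set a1 a2); split; [apply decay_set_open | intro z; apply M2_iff_decay].
Qed.

End Genericity.

(** * The example *)

Lemma sq_eq_prime_mul_sq (r m : Z) : prime r -> ~ (r | m)%Z ->
  forall p q : Z, (p * p = r * m * (q * q))%Z -> q = 0%Z.
Proof.
  intros Hr Hm p q; pose proof (prime_ge_2 r Hr) as Hr2.
  remember (Z.abs_nat q) as n eqn:Hn; revert p q Hn.
  induction n as [n IH] using lt_wf_ind; intros p q Hn E.
  assert (Hp : (r | p)%Z)
    by (destruct (prime_mult r Hr p p) as [Hd | Hd]; auto; exists (m * (q * q))%Z; rewrite E; ring).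
  destruct Hp as [p' ->].
  assert (E' : (r * (p' * p') = m * (q * q))%Z).
  { apply (Z.mul_reg_l _ _ r); [lia |].
    transitivity (p' * r * (p' * r))%Z; [ring | rewrite E; ring]. }
  assert (Hq : (r | q)%Z).
  { destruct (prime_mult r Hr m (q * q)) as [Hd | Hd];
      [exists (p' * p')%Z; rewrite <- E'; ring | contradiction |].
    destruct (prime_mult r Hr q q Hd); auto. }
  destruct Hq as [q' ->].
  destruct (Z.eq_dec q' 0) as [-> | Hq']; [ring |].
  exfalso; apply Hq', (IH (Z.abs_nat q') ltac:(rewrite Hn, Zabs2Nat.inj_mul; nia) p'); auto.
  apply (Z.mul_reg_l _ _ r); [lia |]; rewrite E'; ring.
Qed.

Lemma sqrt_IZR_irrational (n : Z) : (0 <= n)%Z ->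
  (forall p q : Z, (p * p = n * (q * q))%Z -> q = 0%Z) ->
  forall p q : Z, IZR p = sqrt (IZR n) * IZR q -> q = 0%Z.
Proof.
  intros Hn Hsq p q E; apply (Hsq p q), eq_IZR.
  rewrite !mult_IZR, E.
  replace (sqrt (IZR n) * IZR q * (sqrt (IZR n) * IZR q))
    with (sqrt (IZR n) * sqrt (IZR n) * (IZR q * IZR q)) by ring.
  rewrite sqrt_sqrt; [ring | apply IZR_le; lia].
Qed.

Lemma no_sq_2 (p q : Z) : (p * p = 2 * (q * q))%Z -> q = 0%Z.
Proof.
  intro E; apply (sq_eq_prime_mul_sq 2 1 prime_2 ltac:(intros [x Hx]; lia) p); lia.
Qed.

Lemma no_sq_3 (p q : Z) : (p * p = 3 * (q * q))%Z -> q = 0%Z.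
Proof.
  intro E; apply (sq_eq_prime_mul_sq 3 1 prime_3 ltac:(intros [x Hx]; lia) p); lia.
Qed.

Lemma no_sq_6 (p q : Z) : (p * p = 6 * (q * q))%Z -> q = 0%Z.
Proof.
  intro E; apply (sq_eq_prime_mul_sq 2 3 prime_2 ltac:(intros [x Hx]; lia) p); lia.
Qed.

Lemma sqrt3_irrational : irrational (sqrt 3 / 1).
Proof.
  intros [p [q [Hq E]]]; apply Hq, (sqrt_IZR_irrational 3 ltac:(lia) no_sq_3 p).
  rewrite Rdiv_1 in E; rewrite E; field; apply not_0_IZR; auto.
Qed.

(* Squaring a + b sqrt 2 = - c sqrt 3 leaves 2 a b sqrt 2 rational. *)
Lemma sqrt2_sqrt3_Z_lin_indep : Z_lin_indep3 (sqrt 2) (sqrt 3 / 1).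
Proof.
  intros a b c E; rewrite Rdiv_1 in E.
  assert (H2 : sqrt 2 * sqrt 2 = 2) by (apply sqrt_sqrt; lra).
  assert (H3 : sqrt 3 * sqrt 3 = 3) by (apply sqrt_sqrt; lra).
  assert (Hsq : IZR (3 * c * c - a * a - 2 * b * b) = sqrt (IZR 2) * IZR (2 * a * b)).
  { assert (Hc : (IZR a + IZR b * sqrt 2) * (IZR a + IZR b * sqrt 2) = 3 * (IZR c * IZR c)).
    { replace (IZR a + IZR b * sqrt 2) with (- (IZR c * sqrt 3)) by lra.
      transitivity (IZR c * IZR c * (sqrt 3 * sqrt 3)); [ring | rewrite H3; ring]. }
    replace ((IZR a + IZR b * sqrt 2) * (IZR a + IZR b * sqrt 2))
      with (IZR a * IZR a + 2 * IZR a * IZR b * sqrt 2 + IZR b * IZR b * (sqrt 2 * sqrt 2))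
      in Hc by ring.
    rewrite H2 in Hc; rewrite !minus_IZR, !mult_IZR; lra. }
  apply (sqrt_IZR_irrational 2 ltac:(lia) no_sq_2) in Hsq.
  destruct (Z.eq_dec b 0) as [-> | Hb].
  - assert (c = 0%Z).
    { apply (sqrt_IZR_irrational 3 ltac:(lia) no_sq_3 (- a)); rewrite opp_IZR; lra. }
    subst c; repeat split; auto; apply eq_IZR; lra.
  - assert (a = 0%Z) by lia; subst a.
    assert (Hbc : IZR b * IZR b * (sqrt 2 * sqrt 2) = IZR c * IZR c * (sqrt 3 * sqrt 3)).
    { replace (IZR b * IZR b * (sqrt 2 * sqrt 2)) with ((IZR b * sqrt 2) * (IZR b * sqrt 2))
        by ring.
      replace (IZR b * sqrt 2) with (- (IZR c * sqrt 3)) by lra; ring. }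
    rewrite H2, H3 in Hbc.
    assert (Hc : c = 0%Z) by (apply (no_sq_6 (2 * b)), eq_IZR; rewrite !mult_IZR; lra).
    subst c; exfalso; apply Hb, eq_IZR.
    assert (0 < sqrt 2) by (apply sqrt_lt_R0; lra).
    simpl in E; nra.
Qed.

Lemma sqrt3_bounds : 1.7 < sqrt 3 < 1.8.
Proof.
  assert (H3 : sqrt 3 * sqrt 3 = 3) by (apply sqrt_sqrt; lra).
  pose proof (sqrt_pos 3); split; nra.
Qed.

(* Liouville's inequality for the quadratic irrational sqrt 3: the nonzero integer
   3 q^2 - p^2 factors as (sqrt 3 q - p) (sqrt 3 q + p). *)
Lemma sqrt3_rational_approx (p : Z) (q : nat) :
  (0 < q)%nat -> 1 <= 5 * INR q ^ 2 * Rabs (sqrt 3 - IZR p / INR q).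
Proof.
  intros Hq; set (Q := INR q); set (d := Rabs (sqrt 3 - IZR p / Q)).
  assert (HQ : 1 <= Q) by (apply (le_INR 1); lia).
  assert (Hd0 : 0 <= d) by apply Rabs_pos.
  destruct (Rle_lt_dec 1 d) as [Hd | Hd]; [simpl; nra |].
  pose proof sqrt3_bounds as [Hs1 Hs2].
  assert (H3 : sqrt 3 * sqrt 3 = 3) by (apply sqrt_sqrt; lra).
  assert (Hint : 1 <= Rabs (3 * Q * Q - IZR p * IZR p)).
  { assert (Hnz : (3 * (Z.of_nat q * Z.of_nat q) - p * p)%Z <> 0%Z)
      by (intro E; assert (Z.of_nat q = 0%Z) by (apply (no_sq_3 p); lia); lia).
    unfold Q; rewrite INR_IZR_INZ, <- !mult_IZR, <- minus_IZR, <- abs_IZR.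
    apply IZR_le; replace (3 * Z.of_nat q * Z.of_nat q)%Z with (3 * (Z.of_nat q * Z.of_nat q))%Z
      by ring; lia. }
  assert (Hfac : 3 * Q * Q - IZR p * IZR p = (sqrt 3 * Q - IZR p) * (sqrt 3 * Q + IZR p))
    by (transitivity ((sqrt 3 * sqrt 3) * Q * Q - IZR p * IZR p); [rewrite H3 | ]; ring).
  assert (Hleft : Rabs (sqrt 3 * Q - IZR p) = Q * d).
  { unfold d; replace (sqrt 3 * Q - IZR p) with (Q * (sqrt 3 - IZR p / Q)) by (field; lra).
    rewrite Rabs_mult, (Rabs_pos_eq Q) by lra; reflexivity. }
  assert (Hright : Rabs (sqrt 3 * Q + IZR p) <= 5 * Q).
  { replace (sqrt 3 * Q + IZR p) with (2 * sqrt 3 * Q - (sqrt 3 * Q - IZR p)) by ring.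
    eapply Rle_trans; [apply Rabs_triang |]; rewrite Rabs_Ropp, Hleft, Rabs_pos_eq by nra; nra. }
  rewrite Hfac, Rabs_mult, Hleft in Hint.
  apply Rle_trans with (Q * d * Rabs (sqrt 3 * Q + IZR p)); auto.
  apply Rle_trans with (Q * d * (5 * Q)); [apply Rmult_le_compat_l; nra | simpl; nra].
Qed.

(* With M = 5, denominators q >= 2 contradict sqrt3_rational_approx; for q = 1 the bound
   q^-M is 1, which p = 1 and p = 2 meet, so these two are the finite exceptions. *)
Lemma sqrt3_not_Liouville : ~ Liouville (sqrt 3 / 1).
Proof.
  intros [_ HL]; rewrite Rdiv_1 in HL.
  destruct (HL 5 ltac:(lra) ((1%Z, 1%nat) :: (2%Z, 1%nat) :: nil)) as [p [q [Hin [Hq Hlt]]]].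
  pose proof (sqrt3_rational_approx p q Hq) as Hbound.
  assert (HQ : 1 <= INR q) by (apply (le_INR 1); lia).
  replace 5 with (INR 5) in Hlt by (simpl; lra).
  rewrite Rpower_Ropp, Rpower_pow in Hlt by lra.
  assert (Hq1 : q = 1%nat).
  { destruct (Nat.eq_dec q 1) as [| Hq2]; auto; exfalso.
    assert (HQ2 : 2 <= INR q) by (apply (le_INR 2); lia).
    apply (Rmult_lt_compat_l (5 * INR q ^ 2)) in Hlt; [| nra].
    replace (5 * INR q ^ 2 * / INR q ^ 5) with (5 / (INR q * INR q * INR q)) in Hlt
      by (simpl; field; lra).
    assert (8 <= INR q * INR q * INR q) by nra.
    assert (5 / (INR q * INR q * INR q) <= 5 / 8)
      by (apply Rmult_le_compat_l; [lra | apply Rinv_le_contravar; lra]).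
    lra. }
  subst q; simpl INR in Hlt; rewrite Rdiv_1, pow1, Rinv_1 in Hlt.
  apply Rabs_def2 in Hlt as [Hlo Hhi]; pose proof sqrt3_bounds.
  assert (0 < p < 3)%Z as Hp by (split; apply lt_IZR; lra).
  apply Hin; assert (p = 1 \/ p = 2)%Z as [-> | ->] by lia; simpl; auto.
Qed.

Theorem L2_GH_and_M2_dense_Gdelta (a1 a2 : C) :
  Im a2 <> 0 -> irrational (Im a1 / Im a2) -> ~ Liouville (Im a1 / Im a2) ->
  rational (Re a2) -> Z_lin_indep3 (Re a1) (Im a1 / Im a2) ->
  GH a1 a2 (RtoC 0) /\ denseC (M2 a1 a2) /\ G_deltaC (M2 a1 a2).
Proof.
  intros Ha2 Hirr HL Hrat Hind; apply GH_and_M2_dense_Gdelta.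
  - apply symbol_bounded_below_of_non_Liouville; auto.
  - apply symbol_dense_of_Kronecker; auto.
Qed.

Theorem mainTheorem6 :
  (forall a1 a2 : C,
    Im a2 <> 0 ->
    irrational (Im a1 / Im a2) ->
    ~ Liouville (Im a1 / Im a2) ->
    rational (Re a2) ->
    Z_lin_indep3 (Re a1) (Im a1 / Im a2) ->
    GH a1 a2 (RtoC 0) /\ denseC (M2 a1 a2) /\ G_deltaC (M2 a1 a2)) /\
  (let a1 : C := (sqrt 2, sqrt 3) in
   let a2 : C := (1, 1) in
   GH a1 a2 (RtoC 0) /\ denseC (M2 a1 a2) /\ G_deltaC (M2 a1 a2)).
Proof.
  split; [exact L2_GH_and_M2_dense_Gdelta |]; intros a1 a2.
  apply L2_GH_and_M2_dense_Gdelta.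
  - simpl; lra.
  - exact sqrt3_irrational.
  - exact sqrt3_not_Liouville.
  - exists 1%Z, 1%Z; split; [lia | simpl; field].
  - exact sqrt2_sqrt3_Z_lin_indep.
Qed.
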